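(* There is a function $f\colon\mathbb{N}\times\mathbb{N}\to\mathbb{N}$ such that for every prime power $q$ and every positive integer $k$, every $\mathrm{GF}(q)$-representable matroid is $(f(q,k),k)$-weakly base orderable.
   Context: For a positive integer $k$, an ordered pair $(B_1,B_2)$ of bases has the $k$-exchange property if there exist pairwise disjoint nonempty $X_1,\dots,X_k\subseteq B_1\setminus B_2$ and pairwise disjoint nonempty $Y_1,\dots,Y_k\subseteq B_2\setminus B_1$ such that $(B_1\setminus\bigcup_{i\in Z}X_i)\cup\bigcup_{i\in Z}Y_i$ is a basis for every $Z\subseteq[k]$. A matroid is $(\alpha,k)$-weakly base orderable if every ordered pair $(B_1,B_2)$ of bases with $|B_1\setminus B_2|\ge\alpha$ has the $k$-exchange property. *)

From HB Require Import structures.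
From mathcomp Require Import all_boot all_order all_algebra all_field.
Set Implicit Arguments. Unset Strict Implicit. Unset Printing Implicit Defensive.
Import GRing.Theory.
Local Open Scope ring_scope.

(* A matroid on a finite ground set E is given by its set of bases Bs. *)

(* Column matroid of a vector configuration v : E -> F^n.
   A subset I is independent iff the family (v e)_{e in I} is linearly
   independent (with multiplicity: [free] on a sequence counts repeats). *)
Definition col_indep (F : fieldType) (n : nat) (E : finType)
    (v : E -> 'rV[F]_n) (I : {set E}) : bool :=
  free [seq v e | e <- enum I].

Definition col_basis (F : fieldType) (n : nat) (E : finType)
    (v : E -> 'rV[F]_n) (B : {set E}) : Prop :=
  col_indep v B /\ (forall J : {set E}, B \subset J -> col_indep v J -> J = B).

Definition representable_over (F : fieldType) (E : finType)
    (Bs : {set {set E}}) : Prop :=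
  exists (n : nat) (v : E -> 'rV[F]_n),
    forall B : {set E}, B \in Bs <-> col_basis v B.

Definition prime_power (q : nat) : Prop :=
  exists p e : nat, [/\ prime p, (0 < e)%N & q = (p ^ e)%N].

Definition k_exchange (E : finType) (Bs : {set {set E}}) (k : nat)
    (B1 B2 : {set E}) : Prop :=
  exists (X Y : 'I_k -> {set E}),
    [/\ forall i, X i != set0 /\ X i \subset B1 :\: B2,
        forall i, Y i != set0 /\ Y i \subset B2 :\: B1,
        forall i j, i != j -> [disjoint X i & X j],
        forall i j, i != j -> [disjoint Y i & Y j] &
        forall Z : {set 'I_k},
          (B1 :\: \bigcup_(i in Z) X i) :|: \bigcup_(i in Z) Y i \in Bs].

Definition weakly_base_orderable (E : finType) (Bs : {set {set E}})
    (alpha k : nat) : Prop :=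
  forall B1 B2 : {set E}, B1 \in Bs -> B2 \in Bs ->
    (alpha <= #|B1 :\: B2|)%N -> k_exchange Bs k B1 B2.

From HB Require Import structures.
From mathcomp Require Import all_boot all_order all_algebra all_field.
From mathcomp Require Import zify.
Set Implicit Arguments. Unset Strict Implicit. Unset Printing Implicit Defensive.
Import GRing.Theory.
Local Open Scope ring_scope.

(* Expand every column of the representation in the basis [B1]. The block of
   coefficients indexed by [B1 :\: B2] x [B2 :\: B1] has rank at least
   #|B1 :\: B2|, and a Ramsey-type extraction in a matrix of large rank over
   GF(q) yields x_1, ..., x_N in B1 :\: B2 and y_1, ..., y_N in B2 :\: B1 whose
   coefficient matrix is constant above the diagonal, constant below it and
   constant on it ([tri_pattern]), with a diagonal that differs from the upper
   part. Cutting the sequence into k blocks of length q(q-1), exchanging any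
   union of blocks yields a basis: the x_i are recovered from the y_j because
   1 + r + ... + r^(T-1) vanishes for r != 0 whenever q(q-1) divides T. *)

Definition tri_pattern (K : fieldType) (al be ga : K) (i j : nat) : K :=
  if (i < j)%N then al else if i == j then ga else be.

Lemma sum_ord_pred1 (K : fieldType) (vT : vectType K) T (g : nat -> vT) m :
  (m < T)%N -> \sum_(i < T) (if (i : nat) == m then g i else 0) = g m.
Proof.
move=> hm; rewrite (bigD1 (Ordinal hm)) //= eqxx big1 ?addr0 // => i.
by rewrite -val_eqE /= => /negbTE ->.
Qed.

Lemma sum_tri_pattern_col0 (K : fieldType) (al be ga x : K) T : (0 < T)%N ->
  \sum_(i < T) tri_pattern al be ga i 0 * x ^+ i =
  be * \sum_(i < T) x ^+ i + (ga - be).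
Proof.
move=> T0; rewrite mulr_sumr (bigD1 (Ordinal T0)) //= [in RHS](bigD1 (Ordinal T0)) //=.
rewrite /tri_pattern ltn0 eqxx expr0 !mulr1 addrAC [_ + (ga - be)]addrC subrK.
by congr (_ + _); apply: eq_bigr => i /negbTE; rewrite ltn0 -val_eqE /= => ->.
Qed.

Section TriPattern.
Variables (K : fieldType) (vT : vectType K) (W : {vspace vT}).
Variables (e : nat -> vT) (T : nat) (al be ga : K).

Let comb j := \sum_(i < T) tri_pattern al be ga i j *: e i.
Let r := (ga - al) / (ga - be).

Lemma tri_comb_succ j : (j.+1 < T)%N ->
  comb j.+1 - comb j = (ga - be) *: e j.+1 - (ga - al) *: e j.
Proof.
move=> hj; rewrite /comb -sumrB.
have -> : \sum_(i < T) (tri_pattern al be ga i j.+1 *: e i -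
                       tri_pattern al be ga i j *: e i) =
  \sum_(i < T) ((if (i : nat) == j.+1 then (ga - be) *: e i else 0)
              - (if (i : nat) == j then (ga - al) *: e i else 0)).
  apply: eq_bigr => i _; rewrite /tri_pattern -scalerBl.
  have [ij|ji|->] := ltngtP i j.
  - rewrite ltnS (ltnW ij) (ltn_eqF (ltnW ij : (i < j.+1)%N)).
    by rewrite !subrr scale0r.
  - by rewrite ltnNge ji /=; case: eqP; rewrite ?subrr ?scale0r ?subr0.
  - by rewrite ltnSn (ltn_eqF (ltnSn j)) sub0r -scaleNr opprB.
rewrite sumrB (sum_ord_pred1 (fun i => (ga - be) *: e i)) //.
by rewrite (sum_ord_pred1 (fun i => (ga - al) *: e i)) //; apply: ltnW.
Qed.

Lemma tri_comb0E :
  comb 0%N = (\sum_(i < T) tri_pattern al be ga i 0 * r ^+ i) *: e 0%N +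
             \sum_(i < T) tri_pattern al be ga i 0 *: (e i - r ^+ i *: e 0%N).
Proof.
rewrite scaler_suml -big_split; apply: eq_bigr => i _.
by rewrite /= scalerBr scalerA addrC subrK.
Qed.

Hypotheses (ga_neq_be : ga != be) (combW : forall j, (j < T)%N -> comb j \in W).

Lemma tri_comb_ratio j : (j < T)%N -> e j - r ^+ j *: e 0%N \in W.
Proof.
have gbNZ : ga - be != 0 by rewrite subr_eq0.
elim: j => [|j IH] hj; first by rewrite expr0 scale1r subrr mem0v.
have -> : e j.+1 - r ^+ j.+1 *: e 0%N =
    (ga - be)^-1 *: (comb j.+1 - comb j) + r *: (e j - r ^+ j *: e 0%N).
  rewrite tri_comb_succ // scalerBr !scalerA mulVf // scale1r scalerBr scalerA.
  by rewrite -exprS (mulrC _ (ga - al)) -/r addrA subrK.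
by rewrite memvD ?memvZ ?(IH (ltnW hj)) // memvB ?combW // ltnW.
Qed.

Hypothesis geom_sum0 : forall x : K, x != 0 -> \sum_(i < T) x ^+ i = 0.

Lemma tri_comb_span : (ga == al -> ga != 0) -> forall i, (i < T)%N -> e i \in W.
Proof.
move=> ga_al i hi; have T0 : (0 < T)%N by apply: leq_ltn_trans hi.
set c := \sum_(i < T) tri_pattern al be ga i 0 * r ^+ i.
have cNZ : c != 0.
  rewrite /c sum_tri_pattern_col0 //.
  have [r0|rNZ] := eqVneq r 0; last by rewrite geom_sum0 // mulr0 add0r subr_eq0.
  have /ga_al gaNZ : ga == al.
    move/eqP: r0; rewrite /r mulf_eq0 invr_eq0 !subr_eq0 (negbTE ga_neq_be) orbF.
    by move=> /eqP ->.
  rewrite r0 -(prednK T0) big_ord_recl expr0 big1 => [|k _]; last by rewrite expr0n.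
  by rewrite addr0 mulr1 addrC subrK.
have remW : \sum_(i < T) tri_pattern al be ga i 0 *: (e i - r ^+ i *: e 0%N) \in W.
  by apply: memv_suml => k _; rewrite memvZ // tri_comb_ratio.
have e0W : e 0%N \in W.
  have := memvB (combW T0) remW; rewrite tri_comb0E addrK -/c.
  by move/(memvZ c^-1); rewrite scalerA mulVf // scale1r.
by rewrite -(subrK (r ^+ i *: e 0%N) (e i)) memvD ?memvZ ?tri_comb_ratio.
Qed.

End TriPattern.

Lemma geom_sum_finField (F : finFieldType) p e : prime p -> (0 < e)%N ->
  #|F| = (p ^ e)%N -> forall T, (#|F| * (#|F| - 1) %| T)%N ->
  forall r : F, r != 0 -> \sum_(i < T) r ^+ i = 0.
Proof.
move=> p_pr e_gt0 cardF T /dvdnP [m ->] r rNZ.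
have cardF0 : (#|F|%:R : F) = 0.
  by rewrite cardF natrX (pcharf0 (card_finPcharP cardF p_pr)) expr0n gtn_eqF.
have [->|rN1] := eqVneq r 1.
  rewrite (eq_bigr (fun _ => 1)) => [|i _]; last by rewrite expr1n.
  by rewrite sumr_const card_ord !natrM cardF0 mul0r mulr0.
(* [r ^+ (q - 1) = 1], so [r - 1] kills the sum by [subrX1]. *)
have r_q1 : r ^+ (#|F| - 1) = 1.
  apply: (mulIf rNZ); rewrite mul1r -exprSr subn1 prednK ?expf_card //.
  by apply/card_gt0P; exists 0.
have := subrX1 r (m * (#|F| * (#|F| - 1))).
rewrite mulnA mulnC exprM r_q1 expr1n subrr => /esym/eqP.
by rewrite mulf_eq0 subr_eq0 (negbTE rN1) => /eqP.
Qed.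

Section ColumnMatroid.
Variables (F : fieldType) (n : nat) (E : finType) (v : E -> 'rV[F]_n).

Definition cspan (A : {set E}) : {vspace 'rV[F]_n} := <<[seq v e | e <- enum A]>>%VS.

Lemma mem_cspan (A : {set E}) e : e \in A -> v e \in cspan A.
Proof. by move=> eA; apply/memv_span/map_f; rewrite mem_enum. Qed.

Lemma cspan_subv (A : {set E}) (U : {vspace 'rV[F]_n}) :
  (forall e, e \in A -> v e \in U) -> (cspan A <= U)%VS.
Proof. by move=> AU; apply/span_subvP => w /mapP [e eA ->]; apply: AU; rewrite -mem_enum. Qed.

Lemma cspanS (A B : {set E}) : A \subset B -> (cspan A <= cspan B)%VS.
Proof. by move=> /subsetP AB; apply: cspan_subv => e /AB; apply: mem_cspan. Qed.

Lemma cspanU (A B : {set E}) : cspan (A :|: B) = (cspan A + cspan B)%VS.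
Proof.
apply/eqP; rewrite eqEsubv subv_add !cspanS ?subsetUl ?subsetUr // !andbT.
apply: cspan_subv => e; rewrite inE => /orP [] /mem_cspan eA.
  by rewrite (subvP (addvSl _ _)).
by rewrite (subvP (addvSr _ _)).
Qed.

Lemma cspan0 : cspan set0 = 0%VS.
Proof. by rewrite /cspan enum_set0 span_nil. Qed.

Lemma dim_cspan (A : {set E}) : (\dim (cspan A) <= #|A|)%N.
Proof. by rewrite (leq_trans (dim_span _)) // size_map cardE. Qed.

Lemma col_indepE (A : {set E}) : col_indep v A = (\dim (cspan A) == #|A|).
Proof. by rewrite /col_indep /free size_map -cardE. Qed.

Lemma col_indep_sub (A B : {set E}) : A \subset B -> col_indep v B ->
  \dim (cspan A) = #|A|.
Proof.
move=> AB; rewrite !col_indepE => /eqP dimB; apply/eqP; rewrite eqn_leq dim_cspan /=.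
have cardBA : #|B :\: A| = (#|B| - #|A|)%N by rewrite cardsD (setIidPr AB).
have := leq_of_leqif (dimv_add_leqif (cspan A) (cspan (B :\: A))).
have AUB : A :|: B :\: A = B.
  by apply/setP => x; rewrite !inE; case: (boolP (x \in A)) => [/(subsetP AB) ->|].
rewrite -cspanU {}AUB dimB; have := dim_cspan (B :\: A); have := subset_leq_card AB.
lia.
Qed.

Lemma dim_addv_line (U : {vspace 'rV[F]_n}) w : w \notin U ->
  \dim (U + <[w]>) = (\dim U).+1.
Proof.
move=> wU; apply/eqP; rewrite eqn_leq; apply/andP; split.
  have := leq_of_leqif (dimv_add_leqif U <[w]>); rewrite dim_vline.
  by case: (w != 0) => /= ?; lia.
rewrite ltnNge; apply: contra wU => dimUw.
have /eqP -> : (U == U + <[w]>)%VS by rewrite eqEdim addvSl.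
by rewrite (subvP (addvSr _ _)) ?memv_line.
Qed.

Lemma col_basis_span (B : {set E}) e : col_basis v B -> v e \in cspan B.
Proof.
move=> [indB maxB]; have [eB|eNB] := boolP (e \in B); first exact: mem_cspan.
apply: contraT => veNB; suff /(maxB _ (subsetUr _ _)) eBB : col_indep v (e |: B).
  by rewrite -eBB setU11 in eNB.
rewrite col_indepE cardsU1 eNB setUC cspanU /cspan enum_set1 span_seq1 -/(cspan B).
by rewrite dim_addv_line // (eqP (etrans (esym (col_indepE B)) indB)).
Qed.

Lemma col_basis_dim (B : {set E}) : col_basis v B -> \dim (cspan B) = #|B|.
Proof. by case; rewrite col_indepE => /eqP. Qed.

Lemma cspan_sub_basis (B A : {set E}) : col_basis v B -> (cspan A <= cspan B)%VS.
Proof. by move=> Bb; apply: cspan_subv => e _; apply: col_basis_span. Qed.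

Lemma col_basis_card (B1 B2 : {set E}) :
  col_basis v B1 -> col_basis v B2 -> #|B1| = #|B2|.
Proof.
move=> B1b B2b; rewrite -(col_basis_dim B1b) -(col_basis_dim B2b).
by apply/eqP; rewrite eqn_leq !dimvS ?cspan_sub_basis.
Qed.

Lemma col_basis_of_span (B T : {set E}) : col_basis v B -> (#|T| <= #|B|)%N ->
  (forall e, e \in B -> v e \in cspan T) -> col_basis v T.
Proof.
move=> Bb TB BT; have /dimvS := cspan_subv BT; rewrite (col_basis_dim Bb) => BdimT.
have dimT : \dim (cspan T) = #|T|.
  by apply/eqP; rewrite eqn_leq dim_cspan (leq_trans TB).
split=> [|J TJ]; first by rewrite col_indepE dimT.
rewrite col_indepE => /eqP dimJ; apply/eqP; rewrite eq_sym eqEcard TJ /=.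
by rewrite -dimJ -dimT (leq_trans (dimvS (cspan_sub_basis _ Bb))) // col_basis_dim.
Qed.

End ColumnMatroid.

Lemma subv_addl (K : fieldType) (vT : vectType K) (U V W : {vspace vT}) :
  (U <= V)%VS -> (U <= V + W)%VS.
Proof. by move/subv_trans; apply; apply: addvSl. Qed.

Lemma subv_addr (K : fieldType) (vT : vectType K) (U V W : {vspace vT}) :
  (U <= W)%VS -> (U <= V + W)%VS.
Proof. by move/subv_trans; apply; apply: addvSr. Qed.

Ltac subv_sums := match goal with
  | |- is_true ((_ + _ <= _)%VS) => rewrite subv_add; apply/andP; split; subv_sums
  | _ => first [exact: subvv | apply: subv_addl; subv_sums | apply: subv_addr; subv_sums]
  end.

Section BlockRank.
Variables (F : fieldType) (n : nat) (E : finType) (v : E -> 'rV[F]_n) (B1 : {set E}).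

(* When [B1] is a basis, this is the rank of the [R x C] block of the matrix
   whose columns are the coordinates of the [v y], [y \in C], in the basis [B1]. *)
Definition blockrk (R C : {set E}) : nat :=
  (\dim (cspan v C + cspan v (B1 :\: R)) - \dim (cspan v (B1 :\: R)))%N.

Lemma blockrk_col0 R : blockrk R set0 = 0%N.
Proof. by rewrite /blockrk cspan0 add0v subnn. Qed.

Lemma blockrk_colU (R C1 C2 : {set E}) :
  (blockrk R (C1 :|: C2) <= blockrk R C1 + blockrk R C2)%N.
Proof.
rewrite /blockrk cspanU.
set S := cspan v (B1 :\: R); set X1 := cspan v C1; set X2 := cspan v C2.
have := dimv_sum_cap (X1 + S) (X2 + S).
have : (\dim (X1 + X2 + S) <= \dim (X1 + S + (X2 + S)))%N by apply: dimvS; subv_sums.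
have : (\dim S <= \dim ((X1 + S) :&: (X2 + S)))%N.
  by apply: dimvS; rewrite subv_cap; apply/andP; split; subv_sums.
have := dimvS (addvSr X1 S); have := dimvS (addvSr X2 S).
lia.
Qed.

Lemma blockrk_col_bigcup (I : eqType) (l : seq I) R (C : I -> {set E}) :
  (blockrk R (\bigcup_(i <- l) C i) <= \sum_(i <- l) blockrk R (C i))%N.
Proof.
elim: l => [|i l IH]; first by rewrite !big_nil blockrk_col0.
by rewrite !big_cons (leq_trans (blockrk_colU _ _ _)) // leq_add2l.
Qed.

Lemma blockrk_rowD1 (R C : {set E}) x : x \in B1 -> x \in R ->
  (blockrk R C <= (blockrk (R :\ x) C).+1)%N.
Proof.
move=> xB1 xR; rewrite /blockrk.
have -> : B1 :\: (R :\ x) = [set x] :|: (B1 :\: R).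
  by apply/setP => z; rewrite !inE; case: eqVneq => [->|] //=; rewrite xB1 xR.
set S := cspan v (B1 :\: R); set X := cspan v [set x]; set Cs := cspan v C.
rewrite cspanU -/X -/S.
have : (\dim (Cs + S) <= \dim (Cs + (X + S)))%N by apply: dimvS; subv_sums.
have := leq_of_leqif (dimv_add_leqif X S).
have : (\dim X <= 1)%N by rewrite (leq_trans (dim_cspan _ _)) // cards1.
have := dimvS (addvSr Cs S); have := dimvS (addvSr Cs (X + S)).
lia.
Qed.

Hypothesis B1b : col_basis v B1.

Lemma blockrk_row0 C : blockrk set0 C = 0%N.
Proof.
rewrite /blockrk setD0; apply/eqP; rewrite subn_eq0 dimvS //.
by rewrite subv_add subvv cspan_sub_basis.
Qed.

Lemma blockrk_rowU (R1 R2 C : {set E}) : R1 \subset B1 -> R2 \subset B1 ->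
  [disjoint R1 & R2] -> (blockrk (R1 :|: R2) C <= blockrk R1 C + blockrk R2 C)%N.
Proof.
move=> R1B1 R2B1 R12; rewrite /blockrk.
(* Submodularity of [\dim], since [B1 :\: R1] and [B1 :\: R2] cover [B1]. *)
have dimB1 (X : {set E}) : X \subset B1 -> \dim (cspan v X) = #|X|.
  by move=> XB1; apply: col_indep_sub XB1 _; case: B1b.
set S0 := B1 :\: (R1 :|: R2); set S1 := B1 :\: R1; set S2 := B1 :\: R2.
have card0 : #|S0| = (#|B1| - #|R1| - #|R2|)%N.
  rewrite /S0 cardsD (setIidPr _); last by rewrite subUset R1B1 R2B1.
  by rewrite cardsU (disjoint_setI0 R12) cards0 subn0 subnDA.
have card1 : #|S1| = (#|B1| - #|R1|)%N by rewrite /S1 cardsD (setIidPr R1B1).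
have card2 : #|S2| = (#|B1| - #|R2|)%N by rewrite /S2 cardsD (setIidPr R2B1).
have : (#|R1| + #|R2| <= #|B1|)%N.
  have := cardsU R1 R2; rewrite (disjoint_setI0 R12) cards0 subn0 => <-.
  by apply: subset_leq_card; rewrite subUset R1B1 R2B1.
set Cs := cspan v C.
have := dimv_sum_cap (Cs + cspan v S1) (Cs + cspan v S2).
have : (#|B1| <= \dim (Cs + cspan v S1 + (Cs + cspan v S2)))%N.
  rewrite -dimB1 // dimvS //; apply: cspan_subv => e eB1.
  have [eR1|eNR1] := boolP (e \in R1).
    have : e \in S2 by rewrite !inE eB1 (disjointFr R12 eR1).
    by move/(mem_cspan v)/(subvP (subv_addr _ (addvSr _ _))).
  have : e \in S1 by rewrite !inE eB1 eNR1.
  by move/(mem_cspan v)/(subvP (subv_addl _ (addvSr _ _))).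
have : (\dim (Cs + cspan v S0) <= \dim ((Cs + cspan v S1) :&: (Cs + cspan v S2)))%N.
  by apply: dimvS; rewrite subv_cap !addvS ?cspanS ?setDS ?subsetUl ?subsetUr.
have := dimvS (addvSr Cs (cspan v S0)); have := dimvS (addvSr Cs (cspan v S1)).
have := dimvS (addvSr Cs (cspan v S2)).
rewrite !dimB1 ?subsetDl // card0 card1 card2.
lia.
Qed.

Lemma blockrk_row_bigcup (I : eqType) (l : seq I) C (R : I -> {set E}) :
  uniq l -> (forall i, R i \subset B1) ->
  (forall i j, i != j -> [disjoint R i & R j]) ->
  (blockrk (\bigcup_(i <- l) R i) C <= \sum_(i <- l) blockrk (R i) C)%N.
Proof.
move=> + RB1 Rdisj; elim: l => [|i l IH]; first by rewrite !big_nil blockrk_row0.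
rewrite /= => /andP [il lU]; rewrite !big_cons.
have lB1 : \bigcup_(j <- l) R j \subset B1.
  by elim/big_ind: _ => [|X Y XB1 YB1|j _]; rewrite ?sub0set ?subUset ?XB1.
have il_disj : [disjoint R i & \bigcup_(j <- l) R j].
  rewrite -setI_eq0 big_seq; elim/big_ind: _ => [|X Y /eqP X0 /eqP Y0|j jl].
  - by rewrite setI0.
  - by rewrite setIUr X0 Y0 setU0.
  - by rewrite setI_eq0 Rdisj //; apply: contraNneq il => ->.
by rewrite (leq_trans (blockrk_rowU C (RB1 i) lB1 il_disj)) // leq_add2l IH.
Qed.

Lemma card_setD_le_blockrk (B2 : {set E}) : col_basis v B2 ->
  (#|B1 :\: B2| <= blockrk (B1 :\: B2) (B2 :\: B1))%N.
Proof.
move=> B2b; rewrite /blockrk.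
set S := cspan v (B1 :\: (B1 :\: B2)).
have : (#|B2| <= \dim (cspan v (B2 :\: B1) + S))%N.
  rewrite -(col_basis_dim B2b) dimvS //; apply: cspan_subv => e eB2.
  have [eB1|eNB1] := boolP (e \in B1).
    by rewrite (subvP (addvSr _ _)) // mem_cspan // !inE eB1 eB2.
  by rewrite (subvP (addvSl _ _)) // mem_cspan // !inE eB2 eNB1.
have := dim_cspan v (B1 :\: (B1 :\: B2)); rewrite -/S cardsD (setIidPr (subsetDl _ _)).
have := subset_leq_card (subsetDl B1 B2); have := col_basis_card B1b B2b.
lia.
Qed.

End BlockRank.

Lemma exists_large_summand (I : finType) (f : I -> nat) (i0 : I) :
  exists i, (\sum_j f j <= #|I| * f i)%N.
Proof.
case: (arg_maxnP f (isT : predT i0)) => i _ fmax; exists i.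
by rewrite -sum_nat_const leq_sum // => j _; apply: fmax.
Qed.

(* One extraction step divides the rank by [q] twice and deletes one row; the
   [+ 2] keeps the rank at least 2, as [blockrk_nonconst] needs. *)
Fixpoint ramsey_bound (q N : nat) : nat :=
  if N is N'.+1 then (q * (q * ramsey_bound q N' + 1) + 2)%N else 0%N.

Lemma ramsey_bound_ge2 q N : (2 <= ramsey_bound q N.+1)%N.
Proof. exact: leq_addl. Qed.

Lemma ramsey_bound_step q N D0 D1 D2 D3 : (0 < q)%N ->
  (ramsey_bound q N.+1 <= D0)%N -> (D0 <= q * D1)%N -> (D1 <= D2.+1)%N ->
  (D2 <= q * D3)%N -> (ramsey_bound q N <= D3)%N.
Proof.
rewrite /=; set m := ramsey_bound q N => q_gt0 mD0 D01 D12 D23.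
rewrite leqNgt; apply/negP => D3m.
have D2m : (D2 <= q * m.-1)%N.
  by rewrite (leq_trans D23) // leq_mul2l -ltnS prednK ?D3m ?orbT //; lia.
have D0m : (D0 <= q * (q * m.-1 + 1))%N.
  by rewrite (leq_trans D01) // leq_mul2l addn1 (leq_trans D12) ?orbT.
have : (q * (q * m.-1 + 1) <= q * (q * m + 1))%N.
  by rewrite leq_mul2l leq_add2r leq_mul2l leq_pred !orbT.
lia.
Qed.

Section Coefficients.
Variables (F : finFieldType) (n : nat) (E : finType) (v : E -> 'rV[F]_n).
Variables (B1 : {set E}) (B1b : col_basis v B1).

Definition bcoef (y x : E) : F :=
  odflt [ffun=> 0] [pick c : {ffun E -> F} | v y == \sum_(x in B1) c x *: v x] x.

Lemma bcoefE y : v y = \sum_(x in B1) bcoef y x *: v x.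
Proof.
rewrite /bcoef; case: pickP => [c /eqP //|noc]; exfalso.
have := col_basis_span y B1b; rewrite /cspan span_def big_map big_enum /=.
case/memv_sumP => w wB1 vyE.
pose c := [ffun x => odflt 0 [pick k : F | w x == k *: v x]].
suff /eqP : v y = \sum_(x in B1) c x *: v x by rewrite noc.
rewrite vyE; apply: eq_bigr => x xB1; rewrite ffunE.
case: pickP => [k /eqP -> //|nok].
by have [k wxE] := vlineP _ _ (wB1 x xB1); move: (nok k); rewrite wxE eqxx.
Qed.

Lemma blockrk_const (R C : {set E}) : R \subset B1 ->
  {in R, forall x, {in C &, forall y1 y2, bcoef y1 x = bcoef y2 x}} ->
  (blockrk v B1 R C <= 1)%N.
Proof.
move=> RB1 constR; have [->|[y0 y0C]] := set_0Vmem C; first by rewrite blockrk_col0.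
set S := cspan v (B1 :\: R); set w := \sum_(x in R) bcoef y0 x *: v x.
(* Every [v y], [y \in C], is [w] modulo the span of [B1 :\: R]. *)
have CwS : (cspan v C <= <[w]> + S)%VS.
  apply: cspan_subv => y yC; rewrite bcoefE (bigID (mem R)) /= memvD //.
    rewrite (subvP (addvSl _ _)) // (_ : \sum_(i in B1 | i \in R) _ = w) ?memv_line //.
    apply: eq_big => [x|x /andP [_ xR]]; last by rewrite (constR x xR y y0).
    by rewrite andb_idl // => /(subsetP RB1).
  rewrite (subvP (addvSr _ _)) // memv_suml // => x /andP [xB1 xNR].
  by rewrite memvZ // mem_cspan // inE xNR.
rewrite /blockrk -/S leq_subLR (leq_trans (dimvS (_ : _ <= <[w]> + S)%VS)) //.
  by rewrite subv_add CwS addvSr.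
by rewrite (leq_trans (dimv_add_leqif _ _)) // addnC leq_add2l dim_vline leq_b1.
Qed.

Lemma blockrk_nonconst (R C : {set E}) : R \subset B1 -> (2 <= blockrk v B1 R C)%N ->
  exists x y1 y2, [/\ x \in R, y1 \in C, y2 \in C & bcoef y1 x != bcoef y2 x].
Proof.
move=> RB1 rk2.
have [/existsP [x /andP [xR /existsP [y1 /andP [y1C /existsP [y2 /andP [y2C]]]]]]|] :=
  boolP [exists x in R, exists y1 in C, exists y2 in C, bcoef y1 x != bcoef y2 x].
  by exists x, y1, y2.
move/existsPn => const; suff : (blockrk v B1 R C <= 1)%N by rewrite leqNgt rk2.
apply: blockrk_const => // x xR y1 y2 y1C y2C; apply/eqP.
move: (const x); rewrite xR /= => /existsPn/(_ y1); rewrite y1C /=.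
by move=> /existsPn/(_ y2); rewrite y2C negbK.
Qed.

Lemma blockrk_split_cols (R C : {set E}) x : exists c,
  (blockrk v B1 R C <= #|F| * blockrk v B1 R [set y in C | bcoef y x == c])%N.
Proof.
have [c Dc] := exists_large_summand (fun c => blockrk v B1 R [set y in C | bcoef y x == c]) 0.
exists c; apply: leq_trans Dc.
have {1}-> : C = \bigcup_(c : F) [set y in C | bcoef y x == c].
  apply/setP => y; apply/idP/bigcupP => [yC|[c' _]]; last by rewrite inE => /andP [].
  by exists (bcoef y x); rewrite // inE yC /=.
exact: blockrk_col_bigcup.
Qed.

Lemma blockrk_split_rows (R C : {set E}) y : R \subset B1 -> exists d,
  (blockrk v B1 R C <= #|F| * blockrk v B1 [set x in R | bcoef y x == d] C)%N.
Proof.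
move=> RB1.
have [d Dd] := exists_large_summand (fun d => blockrk v B1 [set x in R | bcoef y x == d] C) 0.
exists d; apply: leq_trans Dd.
have {1}-> : R = \bigcup_(d : F) [set x in R | bcoef y x == d].
  apply/setP => x; apply/idP/bigcupP => [xR|[d' _]]; last by rewrite inE => /andP [].
  by exists (bcoef y x); rewrite // inE xR /=.
apply: blockrk_row_bigcup => //; first exact: index_enum_uniq.
  by move=> d'; apply: subset_trans RB1; apply/subsetP => x; rewrite inE => /andP [].
move=> d1 d2 d12; rewrite -setI_eq0; apply/eqP/setP => x; rewrite !inE.
by apply/negP => /andP [/andP [_ /eqP e1] /andP [_ /eqP e2]]; rewrite -e1 -e2 eqxx in d12.
Qed.

Variable x0 : E.

Definition staircase (xs ys : seq E) (cs ds : seq F) : Prop :=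
  [/\ size ys = size xs, uniq xs,
      forall i j, (i < j < size xs)%N ->
        bcoef (nth x0 ys j) (nth x0 xs i) = nth 0 cs i /\
        bcoef (nth x0 ys i) (nth x0 xs j) = nth 0 ds i
    & forall i, (i < size xs)%N -> bcoef (nth x0 ys i) (nth x0 xs i) != nth 0 cs i].

Lemma blockrk_extract_step N (R C : {set E}) : R \subset B1 ->
  (ramsey_bound #|F| N.+1 <= blockrk v B1 R C)%N ->
  exists x y c d, [/\ x \in R, y \in C, bcoef y x != c &
    (ramsey_bound #|F| N <= blockrk v B1 [set x' in R :\ x | bcoef y x' == d]
                                         [set y' in C | bcoef y' x == c])%N].
Proof.
move=> RB1 rkRC; have F_gt0 : (0 < #|F|)%N by apply/card_gt0P; exists 0.
have [x [y1 [y2 [xR y1C y2C y12]]]] :=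
  blockrk_nonconst RB1 (leq_trans (ramsey_bound_ge2 _ _) rkRC).
have [c rkC] := blockrk_split_cols R C x.
have [y yC yxc] : exists2 y, y \in C & bcoef y x != c.
  by case: (eqVneq (bcoef y1 x) c) => [y1c|]; [exists y2; rewrite // -y1c eq_sym|exists y1].
have RxB1 : R :\ x \subset B1 by apply: subset_trans RB1; apply: subD1set.
have [d rkR] := blockrk_split_rows [set y' in C | bcoef y' x == c] y RxB1.
exists x, y, c, d; split=> //.
exact: ramsey_bound_step F_gt0 rkRC rkC (blockrk_rowD1 _ _ (subsetP RB1 x xR) xR) rkR.
Qed.

Lemma blockrk_staircase N (R C : {set E}) : R \subset B1 ->
  (ramsey_bound #|F| N <= blockrk v B1 R C)%N ->
  exists xs ys cs ds, [/\ size xs = N, {subset xs <= R}, {subset ys <= C}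
                        & staircase xs ys cs ds].
Proof.
elim: N R C => [|N IH] R C RB1 rkRC.
  by exists [::], [::], [::], [::]; split=> //; split=> // i j; rewrite ltn0 andbF.
have [x [y [c [d [xR yC yxc rk']]]]] := blockrk_extract_step RB1 rkRC.
have R'B1 : [set x' in R :\ x | bcoef y x' == d] \subset B1.
  by apply/subsetP => x'; rewrite !inE => /andP [/andP [_ /(subsetP RB1)]].
have [xs [ys [cs [ds [<- xsR' ysC' [szy uxs cross diag]]]]]] := IH _ _ R'B1 rk'.
have xsR k : (k < size xs)%N -> nth x0 xs k \in R :\ x /\ bcoef y (nth x0 xs k) = d.
  by move/(mem_nth x0)/xsR'; rewrite !inE => /andP [-> /eqP].
have ysC k : (k < size xs)%N -> nth x0 ys k \in C /\ bcoef (nth x0 ys k) x = c.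
  by rewrite -szy => /(mem_nth x0)/ysC'; rewrite !inE => /andP [-> /eqP].
exists (x :: xs), (y :: ys), (c :: cs), (d :: ds); split=> //.
- by move=> z; rewrite inE => /predU1P [->|/xsR'] //; rewrite !inE => /andP [/andP []].
- by move=> z; rewrite inE => /predU1P [->|/ysC'] //; rewrite !inE => /andP [].
split=> /=; first by rewrite szy.
- rewrite uxs andbT; apply/negP => /xsR'; by rewrite !inE eqxx.
- case=> [|i] [|j] //=; last exact: cross.
  by rewrite ltnS => jxs; rewrite (ysC j jxs).2 (xsR j jxs).2.
- by case=> [|i] //= ixs; apply: diag.
Qed.

End Coefficients.

Lemma tri_pattern_sorted (K : fieldType) (al be ga : K) (I : seq nat) :
  sorted ltn I -> forall m j, (m < size I)%N -> (j < size I)%N ->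
  tri_pattern al be ga (nth 0%N I m) (nth 0%N I j) = tri_pattern al be ga m j.
Proof.
move=> sI m j mI jI; have lt_nth := sorted_ltn_nth ltn_trans 0%N sI.
rewrite /tri_pattern; have [mj|jm|->] := ltngtP m j; last by rewrite ltnn eqxx.
  by rewrite lt_nth.
by rewrite ltnNge ltnW ?(gtn_eqF (lt_nth _ _ _ _ jm)) ?lt_nth.
Qed.

Lemma sum_count_eq (A : Type) (T : finType) (s : seq A) (col : A -> T) :
  (\sum_(k : T) count (fun i => col i == k) s)%N = size s.
Proof.
elim: s => [|i s IH] /=; first by rewrite big1.
rewrite big_split /= IH (bigD1 (col i)) //= eqxx big1 ?addn0 ?add1n // => k.
by rewrite eq_sym => /negbTE ->.
Qed.

Section Realization.
Variables (F : finFieldType) (n : nat) (E : finType) (v : E -> 'rV[F]_n).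
Variables (B1 : {set E}) (x0 : E).
Local Notation bcoef := (bcoef v B1).

Definition realizes (xs ys : seq E) (al be ga : F) : Prop :=
  size ys = size xs /\ forall i j, (i < size xs)%N -> (j < size xs)%N ->
    bcoef (nth x0 ys j) (nth x0 xs i) = tri_pattern al be ga i j.

Lemma realizes_uniq xs ys al be ga : realizes xs ys al be ga -> ga != be -> uniq ys.
Proof.
move=> [szy xsys] ga_be; apply/(uniqP x0) => i j; rewrite !inE szy => ixs jxs.
have neq k l : (k < l < size xs)%N -> nth x0 ys k != nth x0 ys l.
  case/andP=> kl lxs; apply: contra_neq ga_be => ykl.
  move: (xsys l k lxs (ltn_trans kl lxs)); rewrite ykl xsys // /tri_pattern ltnn eqxx.
  by rewrite ltnNge ltnW // gtn_eqF.
have [ij|ji|//] := ltngtP i j; first by move/eqP; rewrite (negbTE (neq i j _)) ?ij.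
by move/esym/eqP; rewrite (negbTE (neq j i _)) ?ji.
Qed.

Lemma realizes_sub xs ys al be ga (I : seq nat) : sorted ltn I ->
  all (gtn (size xs)) I -> realizes xs ys al be ga ->
  realizes [seq nth x0 xs i | i <- I] [seq nth x0 ys i | i <- I] al be ga.
Proof.
move=> sI /allP Ixs [szy xsys]; split; rewrite !size_map // => i j iI jI.
have Ilt k : (k < size I)%N -> (nth 0%N I k < size xs)%N by move=> kI; apply: Ixs; rewrite mem_nth.
by rewrite !(nth_map 0%N) // xsys ?Ilt // tri_pattern_sorted.
Qed.

Lemma realizes_rev xs ys al be ga :
  realizes xs ys al be ga -> realizes (rev xs) (rev ys) be al ga.
Proof.
move=> [szy xsys]; split; rewrite !size_rev // => i j ixs jxs.
rewrite !nth_rev ?szy // xsys /tri_pattern; try lia.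
have [ij|ji|->] := ltngtP i j; last by rewrite ltnn eqxx.
  have lt_ji : (size xs - j.+1 < size xs - i.+1)%N by lia.
  by rewrite ltnNge ltnW // gtn_eqF.
by rewrite (_ : (size xs - i.+1 < size xs - j.+1)%N = true) //; lia.
Qed.

Lemma realizes_shift xs ys al be : realizes xs ys al be be ->
  realizes (take (size xs).-1 xs) (drop 1 ys) al be al.
Proof.
move=> [szy xsys]; split; first by rewrite size_drop size_take_min szy; lia.
move=> i j; rewrite size_take_min => ixs jxs.
rewrite nth_drop nth_take ?xsys /tri_pattern ?add1n; try lia.
have [ij|ji|->] := ltngtP i j; last by rewrite ltnSn.
  by rewrite ltnS ltnW.
by rewrite ltnNge ji; case: eqP.
Qed.

Lemma realizes_take m xs ys al be ga : realizes xs ys al be ga ->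
  realizes (take m xs) (take m ys) al be ga.
Proof.
move=> [szy xsys]; split; first by rewrite !size_take szy.
move=> i j; rewrite size_take_min => ixs jxs.
by rewrite !nth_take ?xsys //; lia.
Qed.

Lemma realizes_const_colors xs ys cs ds c d g (J : seq nat) :
  staircase v B1 x0 xs ys cs ds -> sorted ltn J -> all (gtn (size xs)) J ->
  {in J, forall i, [/\ nth 0 cs i = c, nth 0 ds i = d & bcoef (nth x0 ys i) (nth x0 xs i) = g]} ->
  realizes [seq nth x0 xs i | i <- J] [seq nth x0 ys i | i <- J] c d g.
Proof.
move=> [szy _ cross _] sJ /allP Jxs Jcol; split; rewrite !size_map // => m l mJ lJ.
have Jlt k : (k < size J)%N -> nth 0%N J k \in J /\ (nth 0%N J k < size xs)%N.
  by move=> kJ; have kin := mem_nth 0%N kJ; split=> //; apply: Jxs.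
have [[im ixs] [il lxs]] := (Jlt m mJ, Jlt l lJ).
rewrite !(nth_map 0%N) // -(tri_pattern_sorted _ _ _ sJ) // /tri_pattern.
have [ml|lm|->] := ltngtP (nth 0%N J m) (nth 0%N J l).
- by have [-> _] := cross _ _ (introT andP (conj ml lxs)); case: (Jcol _ im).
- by have [_ ->] := cross _ _ (introT andP (conj lm ixs)); case: (Jcol _ il).
- by case: (Jcol _ il).
Qed.

Lemma staircase_realizes M xs ys cs ds : (0 < M)%N ->
  staircase v B1 x0 xs ys cs ds -> (#|F| ^ 3 * M <= size xs)%N ->
  exists xs' ys' (c d g : F),
    [/\ realizes xs' ys' c d g, (M <= size xs')%N, uniq xs', {subset xs' <= xs}
      & {subset ys' <= ys}] /\ g != c.
Proof.
move=> M_gt0 stair NM; have [szy uxs _ diag] := stair; set N := size xs in NM diag.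
pose color i := (nth 0 cs i, nth 0 ds i, bcoef (nth x0 ys i) (nth x0 xs i)).
have [[[c d] g] Mcol] :=
  exists_large_summand (fun k => count (fun i => color i == k) (iota 0 N)) (0, 0, 0).
set J := [seq i <- iota 0 N | color i == (c, d, g)].
have F_gt0 : (0 < #|F|)%N by apply/card_gt0P; exists 0.
have MJ : (M <= size J)%N.
  rewrite -(@leq_pmul2l (#|F| ^ 3)) ?expn_gt0 ?F_gt0 // (leq_trans NM) // size_filter.
  rewrite -[X in (X <= _)%N](size_iota 0 N) -(sum_count_eq _ color) (leq_trans Mcol) //.
  by rewrite !card_prod !expnS expn0 muln1 !mulnA.
have Jcol : {in J, forall i, (i < N)%N /\ color i = (c, d, g)}.
  by move=> i; rewrite mem_filter mem_iota => /andP [/eqP -> /andP [_ iN]].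
have JN : all (gtn N) J by apply/allP => i /Jcol [].
exists [seq nth x0 xs i | i <- J], [seq nth x0 ys i | i <- J], c, d, g; split; last first.
  have [i0 i0J] : exists i0, i0 \in J by exists (nth 0%N J 0); rewrite mem_nth // (leq_trans M_gt0).
  by have [i0N [<- _ <-]] := Jcol i0 i0J; apply: diag.
split; rewrite ?size_map //.
- apply: realizes_const_colors stair _ JN _.
    exact: (sorted_filter ltn_trans _ (iota_ltn_sorted _ _)).
  by move=> i /Jcol [_ []].
- rewrite map_inj_in_uniq ?filter_uniq ?iota_uniq // => i j /Jcol [iN _] /Jcol [jN _] /eqP.
  by rewrite nth_uniq // => /eqP.
- by move=> z /mapP [i /Jcol [iN _] ->]; rewrite mem_nth.
- by move=> z /mapP [i /Jcol [iN _] ->]; rewrite mem_nth // szy.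
Qed.

(* A pattern whose diagonal differs from the entries above it can be turned,
   by reversing or shifting, into one to which [tri_comb_span] applies. *)
Lemma realizes_normalize M xs ys (c d g : F) : realizes xs ys c d g -> g != c ->
  (M < size xs)%N -> uniq xs ->
  exists xs' ys' (al be ga : F),
    [/\ realizes xs' ys' al be ga, (M <= size xs')%N, uniq xs', {subset xs' <= xs}
      & {subset ys' <= ys}] /\ (ga != be /\ (ga == al -> ga != 0)).
Proof.
move=> real gc Mxs uxs; have [gd|gd] := eqVneq g d; last first.
  exists xs, ys, c, d, g; split; first by split; rewrite // ltnW.
  by split=> // /eqP gc'; rewrite gc' eqxx in gc.
rewrite -{}gd in real; have [g0|gNZ] := eqVneq g 0.
  exists (take (size xs).-1 xs), (drop 1 ys), c, g, c; split; last by rewrite g0 eq_sym in gc *.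
  split; [exact: realizes_shift | by rewrite size_take_min; lia | exact: take_uniq |
          by move=> z /mem_take | by move=> z /mem_drop].
exists (rev xs), (rev ys), g, c, g; split; last by split.
split; [exact: realizes_rev | by rewrite size_rev ltnW | by rewrite rev_uniq | |];
  by move=> z; rewrite mem_rev.
Qed.

Hypothesis B1b : col_basis v B1.

Lemma sum_mem_uniq_nth (xs : seq E) (f : E -> 'rV[F]_n) : uniq xs -> {subset xs <= B1} ->
  \sum_(x in B1 | x \in xs) f x = \sum_(m < size xs) f (nth x0 xs m).
Proof.
move=> uxs xsB1; rewrite (eq_bigl (mem xs)) => [|x]; last by rewrite andb_idl // => /xsB1.
by rewrite -big_uniq // (big_nth x0) big_mkord.
Qed.

(* Swapping all of [xs] for [ys] preserves being a basis: each [v ys_j] is,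
   modulo the span of [B1 :\: xs], the [j]-th combination of [tri_comb_span]. *)
Lemma realizes_exchange_basis xs ys (al be ga : F) : realizes xs ys al be ga ->
  uniq xs -> {subset xs <= B1} -> ga != be -> (ga == al -> ga != 0) ->
  (forall r : F, r != 0 -> \sum_(i < size xs) r ^+ i = 0) ->
  col_basis v ((B1 :\: [set x in xs]) :|: [set y in ys]).
Proof.
move=> real uxs xsB1 ga_be ga_al geom0; have [szy xsys] := real.
set T := _ :|: _; apply: (col_basis_of_span B1b).
  have xsB1' : [set x in xs] \subset B1 by apply/subsetP => x; rewrite inE => /xsB1.
  have cxs : #|[set x in xs]| = size xs by rewrite cardsE (card_uniqP uxs).
  have cys : (#|[set y in ys]| <= size xs)%N.
    by rewrite -szy (leq_trans _ (card_size ys)) ?cardsE.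
  have := subset_leq_card xsB1'; rewrite cxs => xsB1c.
  rewrite (leq_trans (leq_card_setU _ _)) // cardsD (setIidPr xsB1') cxs.
  by rewrite addnBAC // leq_subLR addnC leq_add2r.
move=> e eB1; have [exs|eNxs] := boolP (e \in xs); last by rewrite mem_cspan // !inE eNxs eB1.
suff combT j : (j < size xs)%N ->
    \sum_(i < size xs) tri_pattern al be ga i j *: v (nth x0 xs i) \in cspan v T.
  rewrite -(nth_index x0 exs).
  apply: (tri_comb_span (e := fun m => v (nth x0 xs m)) ga_be combT geom0 ga_al).
  by rewrite index_mem.
move=> jxs; set y := nth x0 ys j.
have yT : v y \in cspan v T by rewrite mem_cspan // !inE mem_nth ?szy ?orbT.
have restT : \sum_(x in B1 | x \notin xs) bcoef y x *: v x \in cspan v T.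
  by apply: memv_suml => x /andP [xB1 xNxs]; rewrite memvZ // mem_cspan // !inE xNxs xB1.
have := memvB yT restT; rewrite {1}(bcoefE B1b y) (bigID (mem xs)) /= addrK.
rewrite sum_mem_uniq_nth //.
by rewrite (eq_bigr (fun m : 'I__ => tri_pattern al be ga m j *: v (nth x0 xs m))) // => m _;
  rewrite /y xsys.
Qed.

End Realization.

Lemma divn_block s k i : (0 < s)%N -> (k * s <= i < k * s + s)%N -> (i %/ s)%N = k.
Proof.
move=> s_gt0 /andP [ksi isk]; have -> : i = (k * s + (i - k * s))%N by lia.
by rewrite divnMDl // divn_small ?addn0 //; lia.
Qed.

Lemma count_divn s k (P : pred nat) : (0 < s)%N ->
  count (fun i => P (i %/ s)%N) (iota 0 (k * s)) = (s * count P (iota 0 k))%N.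
Proof.
move=> s_gt0; elim: k => [|k IH]; first by rewrite mul0n muln0.
rewrite mulSnr iotaD count_cat IH add0n -addn1 iotaD count_cat /= addn0 add0n mulnDr.
congr (_ + _)%N; rewrite (@eq_in_count _ _ (fun _ => P k)) => [|i]; last first.
  by rewrite mem_iota => /(divn_block s_gt0) ->.
by case: (P k); rewrite ?count_predT ?count_pred0 ?size_iota ?muln1 ?muln0.
Qed.

Section Blocks.
Variables (T : finType) (x0 : T) (zs : seq T) (s : nat).

Definition block_set (l : nat) : {set T} :=
  [set x in [seq nth x0 zs i | i <- iota 0 (size zs) & (i %/ s)%N == l]].

Lemma block_set_neq0 l : (0 < s)%N -> (l * s < size zs)%N -> block_set l != set0.
Proof.
move=> s_gt0 lzs; apply/set0Pn; exists (nth x0 zs (l * s)); rewrite inE map_f //.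
by rewrite mem_filter mulnK // eqxx mem_iota.
Qed.

Lemma block_set_sub (A : {set T}) l : {subset zs <= A} -> block_set l \subset A.
Proof.
move=> zsA; apply/subsetP => x; rewrite inE => /mapP [i].
by rewrite mem_filter mem_iota => /and3P [_ _ izs] ->; rewrite zsA // mem_nth.
Qed.

Lemma block_set_disjoint l1 l2 : uniq zs -> l1 != l2 ->
  [disjoint block_set l1 & block_set l2].
Proof.
move=> uzs; apply: contraNT; rewrite -setI_eq0 => /set0Pn [x]; rewrite !inE.
case/andP=> /mapP [i + ->] /mapP [j +]; rewrite !mem_filter !mem_iota.
case/and3P=> /eqP <- _ izs /and3P [/eqP <- _ jzs] /eqP.
by rewrite nth_uniq // => /eqP ->.
Qed.

Lemma bigcup_block_set k (Z : {set 'I_k}) : \bigcup_(l in Z) block_set l =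
  [set x in [seq nth x0 zs i | i <- iota 0 (size zs) & [exists l in Z, (i %/ s)%N == l]]].
Proof.
apply/setP => x; rewrite inE; apply/bigcupP/mapP => [[l lZ]|[i]].
  rewrite inE => /mapP [i]; rewrite mem_filter => /andP [il izs] ->.
  by exists i; rewrite // mem_filter izs andbT; apply/existsP; exists l; rewrite lZ.
rewrite mem_filter => /andP [/existsP [l /andP [lZ il]] izs] ->.
by exists l; rewrite // inE; apply: map_f; rewrite mem_filter il.
Qed.

End Blocks.

Lemma realizes_k_exchange (F : finFieldType) n (E : finType) (v : E -> 'rV[F]_n)
    (Bs : {set {set E}}) (B1 B2 : {set E}) (x0 : E) k s xs ys (al be ga : F) :
  (forall B, B \in Bs <-> col_basis v B) -> col_basis v B1 -> (0 < s)%N ->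
  realizes v B1 x0 xs ys al be ga -> size xs = (k * s)%N -> uniq xs ->
  {subset xs <= B1 :\: B2} -> {subset ys <= B2 :\: B1} ->
  ga != be -> (ga == al -> ga != 0) ->
  (forall T, (s %| T)%N -> forall r : F, r != 0 -> \sum_(i < T) r ^+ i = 0) ->
  k_exchange Bs k B1 B2.
Proof.
move=> Bs_bases B1b s_gt0 real szx uxs xsB ysB ga_be ga_al geom0.
have uys := realizes_uniq real ga_be; have szy : size ys = (k * s)%N by case: real => ->.
have ls_lt (l : 'I_k) : (l * s < k * s)%N by rewrite ltn_mul2r s_gt0 ltn_ord.
exists (block_set x0 xs s), (block_set x0 ys s); split=> [l|l|l1 l2|l1 l2|Z].
- by rewrite block_set_neq0 ?szx ?block_set_sub.
- by rewrite block_set_neq0 ?szy ?block_set_sub.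
- by rewrite -val_eqE; apply: block_set_disjoint.
- by rewrite -val_eqE; apply: block_set_disjoint.
rewrite !bigcup_block_set szy -szx.
set I := [seq i <- _ | _]; apply/Bs_bases.
have sI : sorted ltn I by exact: (sorted_filter ltn_trans _ (iota_ltn_sorted _ _)).
have Ixs : all (gtn (size xs)) I by apply/allP => i; rewrite mem_filter mem_iota => /and3P [].
apply: realizes_exchange_basis (realizes_sub sI Ixs real) _ _ ga_be ga_al _ => //.
- rewrite map_inj_in_uniq ?filter_uniq ?iota_uniq // => i j /(allP Ixs) ixs /(allP Ixs) jxs.
  by move/eqP; rewrite nth_uniq // => /eqP.
- move=> x /mapP [i /(allP Ixs) ixs ->].
  by have := xsB _ (mem_nth x0 ixs); rewrite inE => /andP [].
- apply: geom0; rewrite size_map size_filter szx.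
  by rewrite (count_divn k (fun j => [exists l in Z, j == l :> nat])) // dvdn_mulr.
Qed.

(* Pigeonholing the [q ^ 3] colours of a staircase, then losing one element to
   normalization, leaves [k] blocks of length [q (q - 1)]. *)
Definition exchange_bound (q k : nat) : nat :=
  ramsey_bound q (q ^ 3 * (k * (q * (q - 1)) + 1)).

Lemma col_basis_k_exchange (F : finFieldType) p e n (E : finType)
    (v : E -> 'rV[F]_n) (Bs : {set {set E}}) k (B1 B2 : {set E}) :
  prime p -> (0 < e)%N -> #|F| = (p ^ e)%N ->
  (forall B, B \in Bs <-> col_basis v B) -> col_basis v B1 -> col_basis v B2 ->
  (exchange_bound #|F| k <= #|B1 :\: B2|)%N -> k_exchange Bs k B1 B2.
Proof.
move=> p_pr e_gt0 cardF Bs_bases B1b B2b; rewrite /exchange_bound.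
set s := (#|F| * (#|F| - 1))%N; set M := (k * s + 1)%N => bound.
have M_gt0 : (0 < M)%N by rewrite /M addn1.
have F_gt1 : (1 < #|F|)%N by rewrite cardF -(expn0 p) ltn_exp2l ?prime_gt1.
have s_gt0 : (0 < s)%N by rewrite muln_gt0 subn_gt0 F_gt1 ltnW.
have [x0 _] : exists x0, x0 \in B1 :\: B2.
  have N_gt0 : (0 < #|F| ^ 3 * M)%N by rewrite muln_gt0 expn_gt0 ltnW.
  by apply/card_gt0P; rewrite (leq_trans _ bound) // -(prednK N_gt0) ltnW ?ramsey_bound_ge2.
have [xs [ys [cs [ds [szx xsB ysB stair]]]]] :=
  blockrk_staircase B1b x0 (subsetDl _ _) (leq_trans bound (card_setD_le_blockrk B1b B2b)).
have [xs1 [ys1 [c [d [g [[real1 M1 uxs1 xs1B ys1B] gc]]]]]] :=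
  staircase_realizes M_gt0 stair (eq_leq (esym szx)).
have [xs2 [ys2 [al [be [ga [[real2 M2 uxs2 xs2B ys2B] [ga_be ga_al]]]]]]] :=
  realizes_normalize (M := (k * s)%N) real1 gc (leq_trans (eq_leq (esym (addn1 _))) M1) uxs1.
apply: (realizes_k_exchange Bs_bases B1b s_gt0 (realizes_take (k * s) real2)) => //.
- by rewrite size_take_min; apply/minn_idPl.
- exact: take_uniq.
- by move=> x /mem_take /xs2B /xs1B /xsB.
- by move=> y /mem_take /ys2B /ys1B /ysB.
- exact: geom_sum_finField cardF.
Qed.

Theorem theorem5p14 :
  exists f : nat -> nat -> nat,
    forall q : nat, prime_power q ->
    forall k : nat, (0 < k)%N ->
    forall (F : finFieldType), #|F| = q ->
    forall (E : finType) (Bs : {set {set E}}),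
      representable_over F Bs ->
      weakly_base_orderable Bs (f q k) k.
Proof.
exists exchange_bound => q [p [e [p_pr e_gt0 ->]]] k _ F cardF E Bs [n [v Bs_bases]].
move=> B1 B2 /Bs_bases B1b /Bs_bases B2b; rewrite -cardF.
exact: col_basis_k_exchange p_pr e_gt0 cardF Bs_bases B1b B2b.
Qed.
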